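(* Let $G=G_1\rtimes G_2$ be a finite group, where $G_1$ is a normal subgroup of $G$ and $G_2$ is a subgroup with $G_1\cap G_2=\{1\}$ and $G=G_1G_2$. If $\gcd\{|G_1|,|G_2|\}=1$, then the map $B_0(G)\to B_0(G_1)^{G_2}\times B_0(G_2)$ whose components are the restriction maps to $G_1$ and to $G_2$ is a group isomorphism.
   Context: For a finite group $G$, $\mathbf{Q}/\mathbf{Z}$ denotes the $\mathbf{Z}[G]$-module with trivial $G$-action. A group is bicyclic if it is cyclic or a direct product of two cyclic groups. The Bogomolov multiplier is $B_0(G)=\bigcap_A \operatorname{Ker}\{\operatorname{res}_G^A: H^2(G,\mathbf{Q}/\mathbf{Z})\to H^2(A,\mathbf{Q}/\mathbf{Z})\}$, $A$ running over all bicyclic subgroups of $G$. For $N\lhd G$, $G$ acts on $H^2(N,\mathbf{Q}/\mathbf{Z})$ by conjugation: for a 2-cocycle $\alpha$ and $g\in G$, $({}^g\alpha)(\tau_1,\tau_2)=\alpha(g^{-1}\tau_1g,g^{-1}\tau_2g)$; this action preserves $B_0(N)$, and $B_0(N)^{G_2}$ denotes the elements of $B_0(N)$ fixed by all $g\in G_2$. The restriction map sends $B_0(G)$ into $B_0(G_1)^{G_2}$ and into $B_0(G_2)$. *)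

From mathcomp Require Import all_boot all_order all_algebra all_fingroup all_solvable.
Set Implicit Arguments. Unset Strict Implicit. Unset Printing Implicit Defensive.
Import GRing.Theory Num.Theory.
Local Open Scope ring_scope.

(* Q/Z with trivial action: values in rat, compared modulo the integers. *)
Definition qz_eq (x y : rat) : Prop := (x - y) \is a Num.int.

Section Cohomology.
Variable gT : finGroupType.
Local Open Scope group_scope.

(* inhomogeneous 2-cochains G x G -> Q/Z are represented by functions gT -> gT -> rat;
   only their values on H x H matter when working over the subgroup H. *)
Definition cocycle2 (H : {set gT}) (a : gT -> gT -> rat) : Prop :=
  forall x y z, x \in H -> y \in H -> z \in H ->
    qz_eq (a y z - a (x * y)%g z + a x (y * z)%g - a x y)%R 0%R.

Definition coboundary2 (H : {set gT}) (a : gT -> gT -> rat) : Prop :=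
  exists f : gT -> rat, forall x y, x \in H -> y \in H ->
    qz_eq (a x y) (f y - f (x * y)%g + f x)%R.

Definition cohomologous (H : {set gT}) (a b : gT -> gT -> rat) : Prop :=
  coboundary2 H (fun x y => a x y - b x y)%R.

Definition bicyclic (A : {group gT}) : Prop :=
  cyclic A \/ exists B C : {group gT}, [/\ cyclic B, cyclic C & B \x C = A].

Definition inB0 (H : {set gT}) (a : gT -> gT -> rat) : Prop :=
  forall A : {group gT}, A \subset H -> bicyclic A -> coboundary2 A a.

Definition conj_cochain (g : gT) (a : gT -> gT -> rat) : gT -> gT -> rat :=
  fun t1 t2 => a (t1 ^ g) (t2 ^ g).

Definition fixed_class (N K : {set gT}) (a : gT -> gT -> rat) : Prop :=
  forall g, g \in K -> cohomologous N (conj_cochain g a) a.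

End Cohomology.

From mathcomp Require Import all_boot all_order all_algebra all_fingroup all_solvable.
From mathcomp Require Import ring.
Set Implicit Arguments. Unset Strict Implicit. Unset Printing Implicit Defensive.
Import GRing.Theory Num.Theory.

(* Everything rests on the transfer: if a 2-cocycle on K restricts to a coboundary on
   H <= K, then #|K : H| kills its class.  As #|G : G1| = #|G2| and #|G : G2| = #|G1| are
   coprime, a class of G that dies on G1 and on G2 is trivial, which gives injectivity;
   inner automorphisms act trivially on H^2(G), so restrictions to G1 are G2-fixed.
   For surjectivity, averaging b over the conjugation action of G2 (and multiplying by an
   inverse of #|G2| modulo #|G1|) yields a G2-invariant representative b', and then
   (x s, y t) |-> b'(x, y^(s^-1)) + c(s, t) is a cocycle on G = G1 G2 restricting to b' and c.
   It lies in B_0(G): on a bicyclic A its first summand is killed both by #|A : A :&: G1|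
   (transfer from the bicyclic A :&: G1 <= G1) and by #|G1|, and its second summand is
   inflated from the bicyclic image of A in G2. *)

Ltac int_closed := solve [repeat first [assumption | apply: rpredD | apply: rpredB
  | rewrite rpredN | apply: rpredM | apply: rpred_int | apply: rpred_sum => ? ?]].

Section Cochains.
Variable gT : finGroupType.
Local Open Scope ring_scope.
Implicit Types (H K P : {set gT}) (a b : gT -> gT -> rat) (f : gT -> rat).

Definition delta1 f (x y : gT) := f y - f (x * y)%g + f x.
Definition delta2 a (x y z : gT) := a y z - a (x * y)%g z + a x (y * z)%g - a x y.

Lemma cocycle2E H a : cocycle2 H a <->
  forall x y z, x \in H -> y \in H -> z \in H -> delta2 a x y z \is a Num.int.
Proof. by split=> ca x y z Hx Hy Hz; have := ca x y z Hx Hy Hz; rewrite /qz_eq subr0. Qed.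

Lemma delta2_delta1 f x y z : delta2 (delta1 f) x y z = 0.
Proof. by rewrite /delta2 /delta1 mulgA; ring. Qed.

Lemma cocycle2_delta1 H f : cocycle2 H (delta1 f).
Proof. by apply/cocycle2E => x y z _ _ _; rewrite delta2_delta1 rpred0. Qed.

Lemma cocycle2S H K a : K \subset H -> cocycle2 H a -> cocycle2 K a.
Proof. by move=> sKH ca x y z Kx Ky Kz; apply: ca; apply: (subsetP sKH). Qed.

Lemma cocycle2D H a b : cocycle2 H a -> cocycle2 H b -> cocycle2 H (fun x y => a x y + b x y).
Proof.
move=> /cocycle2E ca /cocycle2E cb; apply/cocycle2E => x y z Hx Hy Hz.
have -> : delta2 (fun x y => a x y + b x y) x y z = delta2 a x y z + delta2 b x y z.
  by rewrite /delta2; ring.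
by rewrite rpredD ?ca ?cb.
Qed.

Lemma cocycle2B H a b : cocycle2 H a -> cocycle2 H b -> cocycle2 H (fun x y => a x y - b x y).
Proof.
move=> /cocycle2E ca /cocycle2E cb; apply/cocycle2E => x y z Hx Hy Hz.
have -> : delta2 (fun x y => a x y - b x y) x y z = delta2 a x y z - delta2 b x y z.
  by rewrite /delta2; ring.
by rewrite rpredB ?ca ?cb.
Qed.

Lemma cocycle2Z H a (k : int) : cocycle2 H a -> cocycle2 H (fun x y => k%:~R * a x y).
Proof.
move=> /cocycle2E ca; apply/cocycle2E => x y z Hx Hy Hz.
have -> : delta2 (fun x y => k%:~R * a x y) x y z = k%:~R * delta2 a x y z.
  by rewrite /delta2; ring.
by rewrite rpredM ?rpred_int ?ca.
Qed.

Lemma cocycle2_sum H P (F : gT -> gT -> gT -> rat) :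
  (forall i, i \in P -> cocycle2 H (F i)) -> cocycle2 H (fun x y => \sum_(i in P) F i x y).
Proof.
move=> cF; apply/cocycle2E => x y z Hx Hy Hz.
have -> : delta2 (fun x y => \sum_(i in P) F i x y) x y z = \sum_(i in P) delta2 (F i) x y z.
  by rewrite /delta2 [RHS]sumrB big_split /= sumrB.
by apply: rpred_sum => i Pi; apply: (cocycle2E _ _).1 (cF i Pi) x y z Hx Hy Hz.
Qed.

Lemma coboundary2_delta1 H f : coboundary2 H (delta1 f).
Proof. by exists f => x y _ _; rewrite /qz_eq subrr rpred0. Qed.

Lemma coboundary2_cst H (k : rat) : coboundary2 H (fun _ _ => k).
Proof. by exists (fun _ => k) => x y _ _; rewrite /qz_eq (_ : _ - _ = 0) ?rpred0 //; ring. Qed.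

Lemma eq_coboundary2 H a b : (forall x y, x \in H -> y \in H -> qz_eq (a x y) (b x y)) ->
  coboundary2 H a -> coboundary2 H b.
Proof.
move=> Eab [f Hf]; exists f => x y Hx Hy; have := Hf x y Hx Hy; have := Eab x y Hx Hy.
rewrite /qz_eq => e1 e2.
have -> : b x y - (f y - f (x * y)%g + f x) =
  (a x y - (f y - f (x * y)%g + f x)) - (a x y - b x y) by ring.
by rewrite rpredB.
Qed.

Lemma coboundary2S H K a : K \subset H -> coboundary2 H a -> coboundary2 K a.
Proof. by move=> sKH [f Hf]; exists f => x y Kx Ky; apply: Hf; apply: (subsetP sKH). Qed.

Lemma coboundary2D H a b : coboundary2 H a -> coboundary2 H b ->
  coboundary2 H (fun x y => a x y + b x y).
Proof.
move=> [f Hf] [g Hg]; exists (fun x => f x + g x) => x y Hx Hy.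
have := Hf x y Hx Hy; have := Hg x y Hx Hy; rewrite /qz_eq => e1 e2.
have -> : a x y + b x y - (f y + g y - (f (x * y)%g + g (x * y)%g) + (f x + g x)) =
  (a x y - (f y - f (x * y)%g + f x)) + (b x y - (g y - g (x * y)%g + g x)) by ring.
by rewrite rpredD.
Qed.

Lemma coboundary2Z H a (k : int) : coboundary2 H a -> coboundary2 H (fun x y => k%:~R * a x y).
Proof.
move=> [f Hf]; exists (fun x => k%:~R * f x) => x y Hx Hy; have := Hf x y Hx Hy.
rewrite /qz_eq => e.
have -> : k%:~R * a x y - (k%:~R * f y - k%:~R * f (x * y)%g + k%:~R * f x) =
  k%:~R * (a x y - (f y - f (x * y)%g + f x)) by ring.
by rewrite rpredM ?rpred_int.
Qed.

Lemma coboundary2_sum H P (F : gT -> gT -> gT -> rat) :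
  (forall i, i \in P -> coboundary2 H (F i)) -> coboundary2 H (fun x y => \sum_(i in P) F i x y).
Proof.
move=> cbF; have /fin_all_exists[g Hg] : forall i, exists f : gT -> rat, i \in P ->
    forall x y, x \in H -> y \in H -> F i x y - delta1 f x y \is a Num.int.
  move=> i; case: (boolP (i \in P)) => Pi; last by exists (fun _ => 0).
  by have [f Hf] := cbF i Pi; exists f.
exists (fun x => \sum_(i in P) g i x) => x y Hx Hy; rewrite /qz_eq.
have -> : \sum_(i in P) F i x y - (\sum_(i in P) g i y - \sum_(i in P) g i (x * y)%g
    + \sum_(i in P) g i x) = \sum_(i in P) (F i x y - delta1 (g i) x y).
  by rewrite /delta1 [RHS]sumrB big_split /= sumrB.
by apply: rpred_sum => i Pi; apply: Hg.
Qed.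

Lemma coboundary2_coprime H a (m n : nat) : coprime m n ->
  coboundary2 H (fun x y => m%:R * a x y) -> coboundary2 H (fun x y => n%:R * a x y) ->
  coboundary2 H a.
Proof.
move=> co_mn cma cna; have [u [v Euv]] := Bezoutz m n.
apply: eq_coboundary2 (coboundary2D (coboundary2Z u cma) (coboundary2Z v cna)) => x y _ _.
rewrite /qz_eq (_ : _ - _ = ((u * m + v * n - 1)%:~R * a x y)); last first.
  by rewrite intrB intrD !intrM /=; ring.
by rewrite Euv /gcdz /= (eqP co_mn) subrr mul0r rpred0.
Qed.

End Cochains.

Section Transfer.
Variables (gT : finGroupType) (K H : {group gT}).
Hypothesis sHK : H \subset K.
Local Open Scope group_scope.
Local Open Scope ring_scope.
Implicit Types (a d : gT -> gT -> rat) (f : gT -> rat).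

(* f x := - d (x (repr (H x))^-1) (repr (H x)), from the factorization of x along the
   right transversal { repr (H x) } of H. *)
Lemma cocycle2_normalize d : cocycle2 K d ->
    (forall x y, x \in H -> y \in H -> d x y \is a Num.int) ->
  exists f, forall h x, h \in H -> x \in K -> d h x - delta1 f h x \is a Num.int.
Proof.
move=> /cocycle2E cd dH; pose r x := repr (H :* x); pose l x := (x * (r x)^-1)%g.
have rH x : (r x * x^-1)%g \in H by rewrite -mem_rcoset mem_repr_rcoset.
have lH x : l x \in H by rewrite -groupV invMg invgK rH.
have rK x : x \in K -> r x \in K.
  by move=> Kx; rewrite -[r x](mulgKV x) groupM // (subsetP sHK).
have rHx h x : h \in H -> r (h * x)%g = r x by move=> Hh; rewrite /r rcosetM rcoset_id.
have lr x : (l x * r x)%g = x by rewrite mulgKV.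
exists (fun x => - d (l x) (r x)) => h x Hh Kx; have Kh := subsetP sHK h Hh.
have := cd h (l x) (r x) Kh (subsetP sHK _ (lH x)) (rK x Kx); rewrite /delta2 lr => e1.
have e2 := dH _ _ Hh (lH x).
have e3 : d (l h) (r h) \is a Num.int by rewrite /r rcoset_id // repr_group dH ?group1.
have -> : d h x - delta1 (fun x => - d (l x) (r x)) h x =
    (d (l x) (r x) - d (h * l x)%g (r x) + d h x - d h (l x)) + d h (l x) + d (l h) (r h).
  by rewrite /delta1 /l rHx // -mulgA -/(l x); ring.
int_closed.
Qed.

Lemma cocycle2_left_invariant d : cocycle2 K d ->
    (forall h x, h \in H -> x \in K -> d h x \is a Num.int) ->
  forall h x y, h \in H -> x \in K -> y \in K -> d (h * x)%g y - d x y \is a Num.int.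
Proof.
move=> /cocycle2E cd dHK h x y Hh Kx Ky.
have := cd h x y (subsetP sHK h Hh) Kx Ky; have := dHK h x Hh Kx.
have := dHK h (x * y)%g Hh (groupM Kx Ky); rewrite /delta2 => e1 e2 e3.
have -> : d (h * x)%g y - d x y = - (d x y - d (h * x)%g y + d h (x * y)%g - d h x)
  + d h (x * y)%g - d h x by ring.
int_closed.
Qed.

Lemma repr_rcoset_mulg C y : C \in rcosets H K -> y \in K ->
  (repr C * y * (repr (C :* y))^-1)%g \in H.
Proof.
case/rcosetsP=> x Kx ->{C} Ky; rewrite -rcosetM.
have e1 : (repr (H :* x) * x^-1)%g \in H by rewrite -mem_rcoset mem_repr_rcoset.
have e2 : (repr (H :* (x * y)) * (x * y)^-1)%g \in H by rewrite -mem_rcoset mem_repr_rcoset.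
have -> : (repr (H :* x) * y * (repr (H :* (x * y)))^-1 =
    (repr (H :* x) * x^-1) * (repr (H :* (x * y)) * (x * y)^-1)^-1)%g.
  by rewrite !invMg !invgK !mulgA mulgKV.
by rewrite groupM ?groupV.
Qed.

(* The transfer: summing d over a right transversal of H in K. *)
Lemma coboundary2_index_left_invariant d : cocycle2 K d ->
    (forall h x y, h \in H -> x \in K -> y \in K -> d (h * x)%g y - d x y \is a Num.int) ->
  coboundary2 K (fun x y => #|K : H|%g%:R * d x y).
Proof.
move=> cd dH; pose F y := \sum_(C in rcosets H K) d (repr C) y.
have reprK C : C \in rcosets H K -> repr C \in K.
  case/rcosetsP=> x Kx ->; rewrite -[repr _](mulgKV x) groupM // (subsetP sHK) //.
  by rewrite -mem_rcoset mem_repr_rcoset.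
exists F => y z Ky Kz; rewrite /qz_eq.
have S1 : \sum_(C in rcosets H K) delta2 d (repr C) y z \is a Num.int.
  by apply: rpred_sum => C /reprK KC; apply: (cocycle2E _ _).1 cd _ _ _ KC Ky Kz.
have S2 : \sum_(C in rcosets H K) (d (repr C * y)%g z - d (repr (C :* y)) z) \is a Num.int.
  apply: rpred_sum => C HC; rewrite -[(repr C * y)%g](mulgKV (repr (C :* y))).
  apply: dH; rewrite ?repr_rcoset_mulg ?reprK //.
  by case/rcosetsP: HC => x Kx ->; rewrite -rcosetM mem_rcosets (mulSGid sHK) groupM.
have S3 : \sum_(C in rcosets H K) d (repr (C :* y)) z = F z.
  rewrite /F (reindex_acts 'Rs (F := fun C => d (repr C) z) (actsRs_rcosets H K) Ky).
  by apply: eq_bigr => C _ /=; rewrite rcosetE.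
have -> : #|K : H|%g%:R * d y z - (F z - F (y * z)%g + F y) =
   \sum_(C in rcosets H K) delta2 d (repr C) y z +
   \sum_(C in rcosets H K) (d (repr C * y)%g z - d (repr (C :* y)) z).
  rewrite -S3 /delta2 !sumrB big_split /= sumrB sumr_const -mulr_natl /F; ring.
by rewrite rpredD.
Qed.

Lemma coboundary2_indexg a : cocycle2 K a -> coboundary2 H a ->
  coboundary2 K (fun x y => #|K : H|%g%:R * a x y).
Proof.
move=> ca [phi Hphi]; pose d0 x y := a x y - delta1 phi x y.
have cd0 : cocycle2 K d0 := cocycle2B ca (cocycle2_delta1 phi).
have [f Hf] := cocycle2_normalize cd0 Hphi.
pose d1 x y := d0 x y - delta1 f x y.
have cd1 : cocycle2 K d1 := cocycle2B cd0 (cocycle2_delta1 f).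
have := coboundary2_index_left_invariant cd1 (cocycle2_left_invariant cd1 Hf).
move/coboundary2D/(_ (coboundary2Z #|K : H|%g (coboundary2_delta1 K phi))).
move/coboundary2D/(_ (coboundary2Z #|K : H|%g (coboundary2_delta1 K f))).
apply: eq_coboundary2 => x y _ _; rewrite /qz_eq -!pmulrn /d1 /d0.
by rewrite (_ : _ - _ = 0) ?rpred0 //; ring.
Qed.

End Transfer.

Section Classes.
Variable gT : finGroupType.
Local Open Scope group_scope.
Local Open Scope ring_scope.
Implicit Types a : gT -> gT -> rat.

Lemma coboundary2_cardg (K : {group gT}) a :
  cocycle2 K a -> coboundary2 K (fun x y => #|K|%:R * a x y).
Proof.
move=> ca; have := coboundary2_indexg (sub1G K) ca; rewrite indexg1; apply.
exists (fun _ => a 1%g 1%g) => x y /set1gP-> /set1gP->.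
by rewrite /qz_eq (_ : _ - _ = 0) ?rpred0 //; ring.
Qed.

Lemma fixed_class_normal (G N : {group gT}) a :
  N \subset G -> cocycle2 G a -> fixed_class N G a.
Proof.
move=> sNG /cocycle2E ca g Gg; exists (fun z => a g (z ^ g)%g - a z g) => x y Nx Ny.
have Gx := subsetP sNG x Nx; have Gy := subsetP sNG y Ny.
have Gxg : (x ^ g)%g \in G by rewrite groupJ.
have Gyg : (y ^ g)%g \in G by rewrite groupJ.
have := ca _ _ _ Gg Gxg Gyg; have := ca _ _ _ Gx Gg Gyg; have := ca _ _ _ Gx Gy Gg.
rewrite /delta2 /conj_cochain -!conjgC -conjMg /qz_eq => e1 e2 e3.
have -> : a (x ^ g)%g (y ^ g)%g - a x y - (a g (y ^ g)%g - a y g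
    - (a g ((x * y) ^ g)%g - a (x * y)%g g) + (a g (x ^ g)%g - a x g)) =
  (a (x ^ g)%g (y ^ g)%g - a (x * g)%g (y ^ g)%g + a g ((x * y) ^ g)%g - a g (x ^ g)%g)
  - (a g (y ^ g)%g - a (x * g)%g (y ^ g)%g + a x (y * g)%g - a x g)
  + (a y g - a (x * y)%g g + a x (y * g)%g - a x y) by ring.
int_closed.
Qed.

End Classes.

Section Bicyclic.
Variable gT : finGroupType.
Local Open Scope group_scope.

Lemma bicyclic_abelian_rank (A : {group gT}) : bicyclic A <-> abelian A /\ 'r(A) <= 2.
Proof.
split=> [[cA | [B [C [cB cC defA]]]] | [aA rA]].
- split; first exact: cyclic_abelian.
  by apply: leq_trans (_ : 'r(A) <= 1) _; rewrite // -abelian_rank1_cyclic ?cyclic_abelian.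
- have [_ defBC cBC _] := dprodP defA.
  have aA : abelian A by rewrite -defBC abelianM cBC !cyclic_abelian.
  split=> //; have [p _ ->] := rank_witness A; rewrite -(p_rank_dprod p defA).
  have rC1 (X : {group gT}) : cyclic X -> 'r_p(X) <= 1.
    move=> cX; apply: leq_trans (p_rank_le_rank p X) _.
    by rewrite -abelian_rank1_cyclic ?cyclic_abelian.
  by rewrite -[2]/(1 + 1)%N leq_add ?rC1.
- have [b defA tA] := abelian_structure aA.
  have : size b <= 2 by rewrite -(size_map order) tA size_abelian_type.
  case: b defA {tA} => [|x [|y [|]]] // defA _.
  + by left; rewrite -defA big_nil cyclic1.
  + by left; rewrite -defA big_cons big_nil dprodg1 cycle_cyclic.
  + right; exists <[x]>%G, <[y]>%G.
    by rewrite !big_cons big_nil dprodg1 in defA; rewrite !cycle_cyclic.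
Qed.

Lemma bicyclicS (A B : {group gT}) : B \subset A -> bicyclic A -> bicyclic B.
Proof.
move=> sBA /bicyclic_abelian_rank[aA rA]; apply/bicyclic_abelian_rank.
by split; [apply: abelianS aA | apply: leq_trans (rankS sBA) rA].
Qed.

Lemma bicyclic_morphim (D : {group gT}) (f : {morphism D >-> gT}) (A : {group gT}) :
  bicyclic A -> bicyclic (f @* A)%G.
Proof.
move=> /bicyclic_abelian_rank[aA rA]; apply/bicyclic_abelian_rank.
by split; [apply: morphim_abelian | apply: leq_trans (morphim_rank_abelian f aA) rA].
Qed.

End Bicyclic.

Section BogomolovMultiplier.
Variable gT : finGroupType.
Local Open Scope ring_scope.
Implicit Types (H K : {set gT}) (a b : gT -> gT -> rat).

Lemma inB0S H K a : K \subset H -> inB0 H a -> inB0 K a.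
Proof. by move=> sKH a0 A sAK; apply: a0; apply: subset_trans sAK sKH. Qed.

Lemma inB0D H a b : inB0 H a -> inB0 H b -> inB0 H (fun x y => a x y + b x y).
Proof. by move=> a0 b0 A sAH bA; apply: coboundary2D; [apply: a0 | apply: b0]. Qed.

Lemma inB0_cohomologous H a b : cohomologous H a b -> inB0 H b -> inB0 H a.
Proof.
move=> ab b0 A sAH bA.
apply: eq_coboundary2 (coboundary2D (coboundary2S sAH ab) (b0 A sAH bA)) => x y _ _.
by rewrite /qz_eq (_ : _ - _ = 0) ?rpred0 //; ring.
Qed.

Lemma cohomologous_trans H a b c :
  cohomologous H a b -> cohomologous H b c -> cohomologous H a c.
Proof.
move=> ab bc; apply: eq_coboundary2 (coboundary2D ab bc) => x y _ _.
by rewrite /qz_eq (_ : _ - _ = 0) ?rpred0 //; ring.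
Qed.

End BogomolovMultiplier.

Section SemidirectProduct.
Variables (gT : finGroupType) (G G1 G2 : {group gT}).
Local Open Scope group_scope.
Hypotheses (nG1G : G1 <| G) (sG2G : G2 \subset G) (tiG12 : G1 :&: G2 = 1)
  (defG : G1 * G2 = G) (cop : coprime #|G1| #|G2|).

Let sG1G : G1 \subset G := normal_sub nG1G.
Let nG1 : G \subset 'N(G1) := normal_norm nG1G.

Lemma card_semidirect : #|G| = (#|G1| * #|G2|)%N.
Proof. by rewrite -defG TI_cardMg. Qed.

Lemma indexg_normal : #|G : G1| = #|G2|.
Proof. by apply/eqP; rewrite -(eqn_pmul2l (cardG_gt0 G1)) Lagrange // card_semidirect. Qed.

Lemma indexg_compl : #|G : G2| = #|G1|.
Proof.
by apply/eqP; rewrite -(eqn_pmul2l (cardG_gt0 G2)) Lagrange // card_semidirect mulnC.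
Qed.

Lemma indexgI_normal_dvd (A : {group gT}) : A \subset G -> (#|A : A :&: G1| %| #|G2|)%N.
Proof.
move=> sAG; rewrite indexgI -indexMg -norm_joinEr ?(subset_trans sAG nG1) //.
by rewrite -indexg_normal indexSg ?joing_subl // join_subG sAG sG1G.
Qed.

Lemma memJ_normal x s : x \in G1 -> s \in G2 -> x ^ s \in G1.
Proof. by move=> G1x G2s; rewrite memJ_norm // (subsetP nG1) // (subsetP sG2G). Qed.

Local Notation nproj := (divgr G1 G2).
Local Notation cproj := (remgr G1 G2).

Let complG2 : G2 \in [complements to G1 in G]. Proof. exact/complP. Qed.

Lemma mem_nproj g : g \in G -> nproj g \in G1.
Proof. by move=> Gg; apply: mem_divgr; rewrite defG. Qed.

Lemma mem_cproj g : g \in G -> cproj g \in G2.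
Proof. by move=> Gg; apply: mem_remgr; rewrite defG. Qed.

Lemma cprojM : {in G &, {morph cproj : x y / x * y}}.
Proof. exact: remgrM complG2 nG1G. Qed.

Lemma nprojM g h : g \in G -> h \in G -> nproj (g * h) = nproj g * nproj h ^ (cproj g)^-1.
Proof.
move=> Gg Gh; have G2r := mem_cproj Gg.
have -> : g * h = (nproj g * nproj h ^ (cproj g)^-1) * (cproj g * cproj h).
  by rewrite conjgE invgK !mulgA !mulgKV; congr (_ * _); apply: divgr_eq.
apply: (divgrMid tiG12); last exact: groupM G2r (mem_cproj Gh).
exact: groupM (mem_nproj Gg) (memJ_normal (mem_nproj Gh) (groupVr G2r)).
Qed.

Lemma nproj_compl s : s \in G2 -> nproj s = 1.
Proof. by move=> G2s; rewrite /divgr remgr_id ?mulgV. Qed.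

Local Open Scope ring_scope.

Lemma coboundary2_restrictions a :
  cocycle2 G a -> coboundary2 G1 a -> coboundary2 G2 a -> coboundary2 G a.
Proof.
move=> ca a1 a2; apply: (coboundary2_coprime cop).
- by rewrite -indexg_compl; apply: coboundary2_indexg.
- by rewrite -indexg_normal; apply: coboundary2_indexg.
Qed.

Lemma compl_invariant_representative b : cocycle2 G1 b -> fixed_class G1 G2 b ->
  exists b', [/\ cocycle2 G1 b', forall t x y, t \in G2 -> b' (x ^ t)%g (y ^ t)%g = b' x y
               & cohomologous G1 b' b].
Proof.
move=> cb fb; have [u [v Euv]] := Bezoutz #|G2| #|G1|.
pose bt x y := \sum_(s in G2) b (x ^ s)%g (y ^ s)%g.
exists (fun x y => u%:~R * bt x y); split.
- apply: cocycle2Z; apply: cocycle2_sum => s G2s; apply/cocycle2E => x y z G1x G1y G1z.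
  rewrite /delta2 !conjMg.
  by apply: (cocycle2E _ _).1 cb _ _ _ (memJ_normal G1x G2s) (memJ_normal G1y G2s)
    (memJ_normal G1z G2s).
- move=> t x y G2t; congr (_ * _); rewrite /bt [RHS](reindex_inj (mulgI t)) /=.
  by apply: eq_big => s; [rewrite groupMl | rewrite !conjgM].
(* [u] inverts [#|G2|] modulo [#|G1|], and [#|G1|] kills the class of [b]. *)
have := coboundary2D (coboundary2Z u (coboundary2_sum fb))
  (coboundary2Z (- v) (coboundary2_cardg cb)).
apply: eq_coboundary2 => x y _ _; rewrite /qz_eq /bt /conj_cochain sumrB sumr_const.
rewrite (_ : _ - _ = (1 - (u * #|G2| + v * #|G1|))%:~R * b x y); last first.
  by rewrite intrB intrD !intrM intrN -mulr_natl /=; ring.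
by rewrite Euv /gcdz /= gcdnC (eqP cop) subrr mul0r rpred0.
Qed.

Section Extension.
Variables b c : gT -> gT -> rat.
Hypotheses (cb : cocycle2 G1 b) (cc : cocycle2 G2 c)
  (bJ : forall t x y, t \in G2 -> b (x ^ t)%g (y ^ t)%g = b x y).

(* With [g = x s], [h = y t] ([x, y] in [G1], [s, t] in [G2]), [g h = (x y^(s^-1)) (s t)]. *)
Definition npart g h := b (nproj g) (nproj h ^ (cproj g)^-1)%g.
Definition cpart g h := c (cproj g) (cproj h).

Lemma cocycle2_npart : cocycle2 G npart.
Proof.
apply/cocycle2E => g h k Gg Gh Gk.
have G2g' : (cproj g)^-1%g \in G2 by rewrite groupV mem_cproj.
have -> : delta2 npart g h k = delta2 b (nproj g) (nproj h ^ (cproj g)^-1)%g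
    (nproj k ^ (cproj g * cproj h)^-1)%g.
  rewrite /delta2 /npart !nprojM ?groupM // cprojM // [((divgr _ _ _ * _) ^ _)%g]conjMg.
  by rewrite -(bJ (nproj h) _ G2g') -!conjgM -invMg.
have G2gh' : (cproj g * cproj h)^-1%g \in G2 by rewrite groupV groupM ?mem_cproj.
exact: (cocycle2E _ _).1 cb _ _ _ (mem_nproj Gg) (memJ_normal (mem_nproj Gh) G2g')
  (memJ_normal (mem_nproj Gk) G2gh').
Qed.

Lemma cocycle2_cpart : cocycle2 G cpart.
Proof.
apply/cocycle2E => g h k Gg Gh Gk; rewrite /delta2 /cpart !cprojM //.
by apply: (cocycle2E _ _).1 cc _ _ _ (mem_cproj Gg) (mem_cproj Gh) (mem_cproj Gk).
Qed.

Lemma npart_normal x y : x \in G1 -> y \in G1 -> npart x y = b x y.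
Proof. by move=> G1x G1y; rewrite /npart remgr1 // invg1 conjg1 !divgr_id. Qed.

Lemma npart_compl s t : s \in G2 -> t \in G2 -> npart s t = b 1%g 1%g.
Proof. by move=> G2s G2t; rewrite /npart !nproj_compl // conj1g. Qed.

Lemma cpart_normal x y : x \in G1 -> y \in G1 -> cpart x y = c 1%g 1%g.
Proof. by move=> G1x G1y; rewrite /cpart !remgr1. Qed.

Lemma cpart_compl s t : s \in G2 -> t \in G2 -> cpart s t = c s t.
Proof. by move=> G2s G2t; rewrite /cpart !remgr_id. Qed.

Lemma cohomologous_normal : cohomologous G1 (fun g h => npart g h + cpart g h) b.
Proof.
apply: eq_coboundary2 (coboundary2_cst G1 (c 1%g 1%g)) => x y G1x G1y.
by rewrite npart_normal // cpart_normal // /qz_eq (_ : _ - _ = 0) ?rpred0 //; ring.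
Qed.

Lemma cohomologous_compl : cohomologous G2 (fun g h => npart g h + cpart g h) c.
Proof.
apply: eq_coboundary2 (coboundary2_cst G2 (b 1%g 1%g)) => s t G2s G2t.
by rewrite npart_compl // cpart_compl // /qz_eq (_ : _ - _ = 0) ?rpred0 //; ring.
Qed.

Lemma npart_inB0 : inB0 G1 b -> inB0 G npart.
Proof.
move=> b0 A sAG bA; have sA1A := subsetIl A G1; have sA1G1 := subsetIr A G1.
have cnA := cocycle2S sAG cocycle2_npart.
have co : coprime #|A : A :&: G1| #|G1|.
  by rewrite (coprime_dvdl (indexgI_normal_dvd sAG)) // coprime_sym.
apply: (coboundary2_coprime co).
- apply: (coboundary2_indexg sA1A cnA).
  apply: eq_coboundary2 (b0 _ sA1G1 (bicyclicS sA1A bA)) => x y /setIP[_ G1x] /setIP[_ G1y].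
  by rewrite npart_normal // /qz_eq subrr rpred0.
apply: coboundary2S sAG _; have := cocycle2Z #|G1| cocycle2_npart; rewrite -pmulrn.
move/coboundary2_restrictions; apply.
- apply: eq_coboundary2 (coboundary2_cardg cb) => x y G1x G1y.
  by rewrite npart_normal // /qz_eq subrr rpred0.
- apply: eq_coboundary2 (coboundary2_cst G2 (#|G1|%:R * b 1%g 1%g)) => s t G2s G2t.
  by rewrite npart_compl // /qz_eq subrr rpred0.
Qed.

Let cprojm : {morphism G >-> gT} := Morphism cprojM.

Lemma cpart_inB0 : inB0 G2 c -> inB0 G cpart.
Proof.
move=> c0 A sAG bA; have sSG2 : cprojm @* A \subset G2.
  by apply/subsetP => _ /morphimP[g Gg _ ->]; apply: mem_cproj.
have [phi Hphi] := c0 _ sSG2 (bicyclic_morphim cprojm bA).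
exists (fun g => phi (cproj g)) => x y Ax Ay; have Gx := subsetP sAG x Ax.
have Gy := subsetP sAG y Ay; rewrite /cpart cprojM //.
by apply: Hphi; apply: (mem_morphim cprojm).
Qed.

End Extension.

End SemidirectProduct.

Local Open Scope group_scope.

Theorem theorem1p5 (gT : finGroupType) (G G1 G2 : {group gT})
  (nG1G : G1 <| G) (sG2G : G2 \subset G) (tiG12 : G1 :&: G2 = 1)
  (defG : G1 * G2 = G) (cop : coprime #|G1| #|G2|) :
  (* well-definedness: the restrictions land in B_0(G1)^{G2} x B_0(G2) *)
  (forall a, cocycle2 G a -> inB0 G a ->
     [/\ inB0 G1 a, fixed_class G1 G2 a & inB0 G2 a]) /\
  (* injectivity on classes *)
  (forall a b, cocycle2 G a -> inB0 G a -> cocycle2 G b -> inB0 G b ->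
     cohomologous G1 a b -> cohomologous G2 a b -> cohomologous G a b) /\
  (* surjectivity onto B_0(G1)^{G2} x B_0(G2) *)
  (forall b c, cocycle2 G1 b -> inB0 G1 b -> fixed_class G1 G2 b ->
     cocycle2 G2 c -> inB0 G2 c ->
     exists a, [/\ cocycle2 G a, inB0 G a, cohomologous G1 a b & cohomologous G2 a c]).
Proof.
have sG1G := normal_sub nG1G; split; [|split].
- move=> a ca a0; split; [exact: inB0S sG1G a0 | | exact: inB0S sG2G a0].
  by move=> g /(subsetP sG2G); apply: fixed_class_normal.
- move=> a b ca _ cb _; exact: coboundary2_restrictions (cocycle2B ca cb).
move=> b c cb b0 fb cc c0.
have [b' [cb' b'J b'b]] := compl_invariant_representative nG1G sG2G cop cb fb.
exists (fun g h => (npart G1 G2 b' g h + cpart G1 G2 c g h)%R); split.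
- exact: cocycle2D (cocycle2_npart nG1G sG2G tiG12 defG cb' b'J)
    (cocycle2_cpart nG1G tiG12 defG cc).
- exact: inB0D (npart_inB0 nG1G sG2G tiG12 defG cop cb' b'J (inB0_cohomologous b'b b0))
    (cpart_inB0 nG1G tiG12 defG c0).
- exact: cohomologous_trans (cohomologous_normal _ _ _ _) b'b.
- exact: cohomologous_compl.
Qed.
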